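(* Let $G=(V,E)$ be a connected geodetic graph, let $r\in V$, and let $T$ be the shortest-path tree of $G$ rooted at $r$. Suppose $u\neq v$ are vertices on the same level of $T$ with $\{u,v\}\in E$. Then for no vertex $u'$ in the subtree of $T$ rooted at $u$ and no vertex $v'$ in the subtree of $T$ rooted at $v$ with $\{u',v'\}\neq\{u,v\}$ is $\{u',v'\}$ an edge of $G$.
   Context: All graphs are finite, simple and undirected. A geodesic from $u$ to $v$ is a shortest path; $G$ is geodetic if for all $u,v\in V$ there is at most one geodesic from $u$ to $v$. For a connected geodetic graph $G$ and $r\in V$, the shortest-path tree rooted at $r$ is the graph $(V,T)$ where $T\subseteq E$ is the set of all edges lying on some shortest path from $r$ to another vertex; it is a tree. The level of a vertex $w$ is its distance $d(r,w)$ from $r$. Subtrees are taken in the rooted tree $(V,T)$. *)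

From mathcomp Require Import all_boot.
Set Implicit Arguments. Unset Strict Implicit. Unset Printing Implicit Defensive.

Section Geo.
Variable V : finType.

Definition simple_graph (e : rel V) := symmetric e /\ irreflexive e.

Fixpoint ppath (R : V -> V -> Prop) (x : V) (p : seq V) : Prop :=
  if p is y :: p' then R x y /\ ppath R y p' else True.

(* x :: p is a walk in G from x to last x p, of length size p. *)
Definition walk (e : rel V) x p := ppath (fun a b => e a b) x p.

Definition connected (e : rel V) := forall x y : V, connect e x y.

Definition dist_is (e : rel V) (x y : V) (n : nat) :=
  (exists p, walk e x p /\ last x p = y /\ size p = n) /\
  (forall p, walk e x p -> last x p = y -> n <= size p).

Definition geodesic (e : rel V) (x : V) (p : seq V) :=
  walk e x p /\ forall q, walk e x q -> last x q = last x p -> size p <= size q.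

Definition geodetic (e : rel V) :=
  forall x p q, geodesic e x p -> geodesic e x q -> last x p = last x q -> p = q.

(* {a,b} is an edge of the shortest-path tree rooted at r: an edge of G lying
   on some shortest path from r *)
Definition spt_edge (e : rel V) (r : V) (a b : V) : Prop :=
  e a b /\ exists p, geodesic e r p /\
    exists s1 s2, r :: p = s1 ++ a :: b :: s2 \/ r :: p = s1 ++ b :: a :: s2.

Definition in_subtree (e : rel V) (r u w : V) : Prop :=
  exists p, ppath (spt_edge e r) r p /\ last r p = w /\ uniq (r :: p) /\
            u \in r :: p.

End Geo.

(* Along the tree path from r to u', the vertex u sits at depth n = d(r,u), and
   tree paths are geodesics, so d(r,u') = n + |Bu| and d(r,v') = n + |Bv| where
   Bu, Bv are the tree paths from u to u' and from v to v'; say |Bu| <= |Bv|.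
   If u'v' were an edge, any walk from u to v' of length at most |Bv| would,
   prefixed by the tree path to u, give a second geodesic from r to v' (through
   u instead of v).  Hence d(u,v') = |Bv| + 1 = |Bu| + 1, so u,v,Bv and
   u,Bu,v' are both geodesics from u to v' and must coincide: either both
   branches are trivial, i.e. {u',v'} = {u,v}, or the geodesic to u' passes
   through v at depth n + 1, contradicting d(r,v) = n. *)
From mathcomp Require Import all_boot.
From Stdlib Require Import Setoid.

Set Implicit Arguments. Unset Strict Implicit. Unset Printing Implicit Defensive.

Lemma mem_split_last (T : eqType) (x u : T) p :
  u \in x :: p -> exists A B, p = A ++ B /\ last x A = u.
Proof.
rewrite in_cons => /orP [/eqP -> | /splitPr [p1 p2]]; first by exists [::], p.
by exists (rcons p1 u), p2; rewrite cat_rcons last_rcons.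
Qed.

Lemma cons_eq_cat_pair (T : Type) (x a b : T) p s1 s2 :
  x :: p = s1 ++ a :: b :: s2 -> exists p1, p = p1 ++ b :: s2 /\ last x p1 = a.
Proof.
case: s1 => [|c s1] /= [-> ->]; first by exists [::].
by exists (rcons s1 a); rewrite cat_rcons last_rcons.
Qed.

Section Geodesics.
Variables (V : finType) (e : rel V).

Lemma ppath_rcons (R : V -> V -> Prop) x p y :
  ppath R x (rcons p y) -> ppath R x p /\ R (last x p) y.
Proof. by elim: p x => [|z p IH] x /=; [case | case=> ? /IH []]. Qed.

Lemma walkP x p : walk e x p <-> path e x p.
Proof.
elim: p x => [|y p IH] x //=; split.
- by case=> -> /(IH y).1.
- by case/andP=> exy /(IH y).2.
Qed.

Lemma walk_cat x p1 p2 :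
  walk e x (p1 ++ p2) <-> walk e x p1 /\ walk e (last x p1) p2.
Proof. by rewrite !walkP cat_path; split; [move/andP | move=> [-> ->]]. Qed.

Lemma walk_rcons x p y : walk e x (rcons p y) <-> walk e x p /\ e (last x p) y.
Proof. by rewrite !walkP rcons_path; split; [move/andP | move=> [-> ->]]. Qed.

Lemma geodesic_prefix x p1 p2 : geodesic e x (p1 ++ p2) -> geodesic e x p1.
Proof.
move=> [/walk_cat [w1 w2] min]; split=> // q wq lq.
have wq2 : walk e x (q ++ p2) by apply/walk_cat; rewrite lq.
by have := min _ wq2; rewrite !last_cat lq !size_cat leq_add2r; apply.
Qed.

Lemma geodesic_short_walk x p q :
  geodesic e x p -> walk e x q -> last x q = last x p -> size q <= size p ->
  geodesic e x q.
Proof.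
move=> [_ min] wq lq le_qp; split=> // q' wq' lq'.
by rewrite (leq_trans le_qp) // min // lq' lq.
Qed.

Lemma geodesic_size x p n : geodesic e x p -> dist_is e x (last x p) n -> size p = n.
Proof.
move=> [wp min] [[q [wq [lq <-]]] dist_min].
by apply/eqP; rewrite eqn_leq min ?lq ?dist_min.
Qed.

Hypothesis geo : geodetic e.

Lemma geodetic_prefix_eq x A1 B1 A2 B2 :
  geodesic e x (A1 ++ B1) -> geodesic e x (A2 ++ B2) ->
  last x (A1 ++ B1) = last x (A2 ++ B2) -> size A1 = size A2 -> A1 = A2.
Proof.
move=> g1 g2 l12 s12; have /eqP := geo g1 g2 l12.
by rewrite eqseq_cat // => /andP [/eqP].
Qed.

Lemma geodesic_rcons_spt_edge r p x :
  geodesic e r p -> spt_edge e r (last r p) x -> x \notin r :: p ->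
  geodesic e r (rcons p x).
Proof.
move=> gp [_ [g [gg [s1 [s2 [] /(@cons_eq_cat_pair V) [g1 [dg lg]]]]]]].
- have g1x : geodesic e r (rcons g1 x).
    by apply: (geodesic_prefix (p2 := s2)); rewrite cat_rcons -dg.
  have g1g : geodesic e r g1 by apply: (geodesic_prefix (p2 := [:: x])); rewrite cats1.
  by rewrite (geo gp g1g) // lg.
- have g1p : geodesic e r (rcons g1 (last r p)).
    by apply: (geodesic_prefix (p2 := s2)); rewrite cat_rcons -dg.
  rewrite (geo gp g1p) ?last_rcons // -rcons_cons mem_rcons in_cons -lg.
  by rewrite mem_last orbT.
Qed.

Lemma spt_path_geodesic r p :
  ppath (spt_edge e r) r p -> uniq (r :: p) -> geodesic e r p.
Proof.
elim/last_ind: p => [|p x IH]; first by split=> // q.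
move=> /ppath_rcons [pp ex]; rewrite -rcons_cons rcons_uniq => /andP [xn un].
exact: geodesic_rcons_spt_edge (IH pp un) ex xn.
Qed.

Lemma in_subtree_geodesic r u w :
  in_subtree e r u w ->
  exists A B, [/\ geodesic e r (A ++ B), last r A = u & last u B = w].
Proof.
move=> [p [pp [lp [up /mem_split_last [A [B [dp lA]]]]]]].
exists A, B; split=> //; last by rewrite -lA -last_cat -dp.
by rewrite -dp; apply: spt_path_geodesic.
Qed.

Lemma level_detour_long r u v Au Av Bv q :
  u != v -> walk e r Au -> last r Au = u -> size Au = size Av ->
  geodesic e r (Av ++ Bv) -> last r Av = v ->
  walk e u q -> last u q = last v Bv -> size Bv < size q.
Proof.
move=> neq_uv wAu lAu sA gv lAv wq lq; rewrite ltnNge; apply/negP => le_q.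
have wAq : walk e r (Au ++ q) by apply/walk_cat; rewrite lAu.
have lAq : last r (Au ++ q) = last r (Av ++ Bv) by rewrite !last_cat lAu lAv lq.
have gAq : geodesic e r (Au ++ q).
  by apply: geodesic_short_walk gv wAq lAq _; rewrite !size_cat sA leq_add2l.
by move: neq_uv; rewrite -lAu -lAv (geodetic_prefix_eq gAq gv) ?eqxx.
Qed.

Lemma level_edge_branches r u v n Au Bu Av Bv :
  u != v -> e u v -> dist_is e r u n -> dist_is e r v n ->
  geodesic e r (Au ++ Bu) -> last r Au = u ->
  geodesic e r (Av ++ Bv) -> last r Av = v ->
  size Bu <= size Bv -> e (last u Bu) (last v Bv) ->
  Bu = [::] /\ Bv = [::].
Proof.
move=> neq_uv euv du dv gu lAu gv lAv le_B eBB.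
have sAu : size Au = n by apply: geodesic_size (geodesic_prefix gu) _; rewrite lAu.
have sAv : size Av = n by apply: geodesic_size (geodesic_prefix gv) _; rewrite lAv.
have [wAu wBu] : walk e r Au /\ walk e u Bu by rewrite -lAu; apply/walk_cat; case: gu.
have [_ wBv] : walk e r Av /\ walk e v Bv by rewrite -lAv; apply/walk_cat; case: gv.
have sA : size Au = size Av by rewrite sAu sAv.
have far := level_detour_long neq_uv wAu lAu sA gv lAv.
have wBu' : walk e u (rcons Bu (last v Bv)) by apply/walk_rcons.
have wvBv : walk e u (v :: Bv) by [].
have sB : size Bu = size Bv.
  by apply/eqP; rewrite eqn_leq le_B -ltnS -(size_rcons Bu (last v Bv)) far ?last_rcons.
have geodesic_via q : walk e u q -> last u q = last v Bv -> size q = (size Bv).+1 ->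
    geodesic e u q.
  by move=> wq lq sq; split=> // q' wq' lq'; rewrite sq far // lq' lq.
have gBu : geodesic e u (rcons Bu (last v Bv)).
  by apply: geodesic_via; rewrite ?last_rcons ?size_rcons ?sB.
have gvBv : geodesic e u (v :: Bv) by apply: geodesic_via.
have := geo gBu gvBv; rewrite last_rcons => /(_ erefl).
case: Bu gu sB {wBu wBu' le_B eBB gBu} => [|b Bu] gu sB.
  by case: Bv sB {wBv wvBv far geodesic_via gvBv gv}.
case=> b_v _; have gv' : geodesic e r (rcons Au v).
  by apply: (geodesic_prefix (p2 := Bu)); rewrite cat_rcons -b_v.
have := geodesic_size gv'; rewrite last_rcons size_rcons sAu.
by move=> /(_ _ dv) /esym /n_Sn.
Qed.

End Geodesics.

Theorem lemma5 (V : finType) (e : rel V) (r u v : V) :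
  simple_graph e -> connected e -> geodetic e ->
  u != v -> e u v ->
  (exists n, dist_is e r u n /\ dist_is e r v n) ->
  forall u' v' : V,
    in_subtree e r u u' -> in_subtree e r v v' ->
    ~ (u' = u /\ v' = v) -> ~ (u' = v /\ v' = u) ->
    ~~ e u' v'.
Proof.
move=> [e_sym _] _ geo neq_uv euv [n [du dv]] u' v' sub_u sub_v not_uv _.
apply/negP => eu'v'.
have [Au [Bu [gu lAu lBu]]] := in_subtree_geodesic geo sub_u.
have [Av [Bv [gv lAv lBv]]] := in_subtree_geodesic geo sub_v.
have eBB : e (last u Bu) (last v Bv) by rewrite lBu lBv.
apply: not_uv; rewrite -lBu -lBv.
have [le_B | /ltnW le_B] := leqP (size Bu) (size Bv).
  by have [-> ->] := level_edge_branches geo neq_uv euv du dv gu lAu gv lAv le_B eBB.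
rewrite eq_sym in neq_uv; rewrite e_sym in euv; rewrite e_sym in eBB.
by have [-> ->] := level_edge_branches geo neq_uv euv dv du gv lAv gu lAu le_B eBB.
Qed.
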